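(* Let $\mathbf{C}=\mathbf{C}_1\,\dot\cup\,\mathbf{C}_2$ and $\mathbf{B}=\mathbf{B}_+\,\dot\cup\,\mathbf{B}'\in\dot{\mathbb{P}}(\mathbb{L}(\mathbf{C}_1))$ with $|\mathbf{B}|=|\mathbf{C}_1|$, and suppose every $L\in\mathbf{B}_+$ has a positive monotonic effect on $D$ relative to $\mathbf{C}$. If for some tree $\mathfrak{T}$ on $\mathbf{B}_+$, some $\omega^*\in\Omega$ and some values $\mathbf{c}_2$ of $\mathbf{C}_2$, $$D_{\mathbf{B}=\mathbf{1},\mathbf{C}_2=\mathbf{c}_2}(\omega^* )-\sum_{L\in\mathbf{B}}D_{\mathbf{B}\setminus\{L\}=\mathbf{1},L=0,\mathbf{C}_2=\mathbf{c}_2}(\omega^* )+\sum_{\mathbf{E}\in\mathfrak{T}}D_{\mathbf{B}\setminus\mathbf{E}=\mathbf{1},\mathbf{E}=\mathbf{0},\mathbf{C}_2=\mathbf{c}_2}(\omega^* )>0,$$ then $\mathbf{B}$ is irreducible for $\mathcal{D}(\mathbf{C},\Omega)$.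
   Context: Events are binary random variables on a population $\Omega$; $\overline{X}=1-X$; $\mathbb{L}(\mathbf{C})=\mathbf{C}\cup\{\overline{X}:X\in\mathbf{C}\}$; $\dot{\mathbb{P}}(\mathbb{L}(\mathbf{C}))$ is the set of subsets of $\mathbb{L}(\mathbf{C})$ not containing both $X$ and $\overline{X}$; $(L)_{\mathbf{c}}$ is the value of literal $L$ under assignment $\mathbf{c}$; $\bigwedge(\mathbf{B})=\min_{L\in\mathbf{B}}L$. Potential outcomes $\mathcal{D}(\mathbf{C},\Omega)$: $D_{\mathbf{c}}(\omega)\in\{0,1\}$ for all $\omega$, $\mathbf{c}$. Since $|\mathbf{B}|=|\mathbf{C}_1|$, setting the literals of $\mathbf{B}$ determines an assignment to $\mathbf{C}_1$; e.g. $D_{\mathbf{B}\setminus\mathbf{E}=\mathbf{1},\mathbf{E}=\mathbf{0},\mathbf{C}_2=\mathbf{c}_2}$ sets the literals in $\mathbf{E}$ to 0, the other literals of $\mathbf{B}$ to 1 and $\mathbf{C}_2$ to $\mathbf{c}_2$. A literal $L\in\mathbb{L}(\mathbf{C})$ has a positive monotonic effect on $D$ relative to $\mathbf{C}$ if for all $\omega$ and all pairs of assignments $\mathbf{c},\mathbf{c}'$ differing only in the variable underlying $L$, with $(L)_{\mathbf{c}}=1$ and $(L)_{\mathbf{c}'}=0$, one has $D_{\mathbf{c}}(\omega)\ge D_{\mathbf{c}'}(\omega)$. A tree on a finite set $\mathbf{S}$ is a set $\mathfrak{T}$ of 2-element subsets (edges) of $\mathbf{S}$ with $|\mathfrak{T}|=|\mathbf{S}|-1$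 such that every two distinct elements of $\mathbf{S}$ are joined by a path of edges (when $|\mathbf{B}_+|\le1$ the tree is empty). A sufficient cause representation $(\mathbf{A},\mathfrak{B})$ for $\mathcal{D}(\mathbf{C},\Omega)$ is a tuple $\mathbf{A}=\langle A_1,\dots,A_p\rangle$ of binary random variables on $\Omega$ unaffected by interventions on $\mathbf{C}$ and $\mathfrak{B}=\langle\mathbf{B}_1,\dots,\mathbf{B}_p\rangle$, $\mathbf{B}_i\in\dot{\mathbb{P}}(\mathbb{L}(\mathbf{C}))$, with: $D_{\mathbf{c}}(\omega)=1$ iff some $j$ has $A_j(\omega)=1$ and $(\bigwedge(\mathbf{B}_j))_{\mathbf{c}}=1$. $\mathbf{B}$ is irreducible for $\mathcal{D}(\mathbf{C},\Omega)$ if in every such representation some $\mathbf{B}_i\supseteq\mathbf{B}$. *)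

From HB Require Import structures.
From mathcomp Require Import all_boot all_order all_algebra.
Set Implicit Arguments. Unset Strict Implicit. Unset Printing Implicit Defensive.
Import Order.TTheory GRing.Theory Num.Theory.

(* Variables (the set C) form a finite type V.  A literal is a pair (x, b):
   (x, true) is the event X, (x, false) is its complement 1 - X. *)
Definition literal (V : finType) := (V * bool)%type.

Definition lit_val (V : finType) (L : literal V) (c : {ffun V -> bool}) : bool :=
  if L.2 then c L.1 else ~~ c L.1.

(* membership in \dot{P}(L(C)): no X together with its complement *)
Definition consistent (V : finType) (B : {set literal V}) : Prop :=
  forall x : V, ~~ (((x, true) \in B) && ((x, false) \in B)).

(* (/\ B)_c = min_{L in B} (L)_c  (= 1 for empty B) *)
Definition conj_val (V : finType) (B : {set literal V}) (c : {ffun V -> bool}) : bool :=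
  [forall L in B, lit_val L c].

Definition outcomes (V : finType) (Omega : Type) := {ffun V -> bool} -> Omega -> bool.

Definition pos_monotonic (V : finType) (Omega : Type) (D : outcomes V Omega)
  (L : literal V) : Prop :=
  forall (w : Omega) (c c' : {ffun V -> bool}),
    (forall y, y != L.1 -> c y = c' y) ->
    lit_val L c -> ~~ lit_val L c' ->
    (D c' w <= D c w)%N.

(* sufficient cause representation (A, B) with p components; the A_j are
   functions of omega only, hence unaffected by interventions on C *)
Definition suff_cause_rep (V : finType) (Omega : Type) (D : outcomes V Omega)
  (p : nat) (A : 'I_p -> Omega -> bool) (Bs : 'I_p -> {set literal V}) : Prop :=
  (forall j, consistent (Bs j)) /\
  (forall (c : {ffun V -> bool}) (w : Omega),
     D c w = [exists j : 'I_p, A j w && conj_val (Bs j) c]).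

Definition irreducible (V : finType) (Omega : Type) (D : outcomes V Omega)
  (B : {set literal V}) : Prop :=
  forall (p : nat) (A : 'I_p -> Omega -> bool) (Bs : 'I_p -> {set literal V}),
    suff_cause_rep D A Bs -> exists i : 'I_p, B \subset Bs i.

(* The assignment  B \ E = 1, E = 0, C2 = c2 : variables of C1 get the value
   making their literal of B equal to 1 unless the literal lies in E (then 0);
   variables outside C1 (i.e. in C2) get the value c2. *)
Definition assign (V : finType) (C1 : {set V}) (B E : {set literal V})
  (c2 : {ffun V -> bool}) : {ffun V -> bool} :=
  [ffun x => if x \in C1 then
               (if (x, true) \in B then (x, true) \notin E else (x, false) \in E)
             else c2 x].

Definition is_tree (V : finType) (S : {set literal V}) (T : {set {set literal V}}) : Prop :=
  (forall E, E \in T -> (E \subset S) && (#|E| == 2)) /\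
  #|T| = (#|S| - 1)%N /\
  (forall x y, x \in S -> y \in S -> x != y ->
     connect (fun a b : literal V => [set a; b] \in T) x y).

Definition bZ (b : bool) : int := Posz (nat_of_bool b).

From HB Require Import structures.
From mathcomp Require Import all_boot all_order all_algebra.
From mathcomp Require Import zify.
Import Order.TTheory GRing.Theory Num.Theory.
Local Open Scope ring_scope.

(* Write f(E) for the outcome D_{B\E=1, E=0, C2=c2}(w).  Suppose some
   sufficient cause representation has no component B_j containing B; we
   show that  f(0) - sum_{L in B} f({L}) + sum_{E in T} f(E) <= 0.
   - Monotonicity of the literals of B+ makes f antitone in the literals of
     B+ that are switched off; hence an edge E = {a,b} of T with f(E) = 1
     lies inside U = { L in B+ | f({L}) = 1 }.
   - A tree has at most |U| - 1 edges inside any subset U of its vertices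
     (a purely combinatorial fact, proved first: growing U to the whole
     vertex set, every new vertex brings a new edge leaving U).
   - If f(0) = 1, the firing component B_j misses a literal L of B; switching
     L off keeps B_j satisfied, so f({L}) = 1.
   Together: f(0) + sum_T f(E) <= f(0) + |U| - 1 <= sum_B f({L}), since
   |U| <= sum_B f({L}). *)

Lemma sum_indicator_card {X : finType} (A : {set X}) (P : pred X) :
  (\sum_(i in A) (P i : nat) = #|[set i in A | P i]|)%N.
Proof.
rewrite -sum1_card [RHS]big_mkcond [LHS]big_mkcond /=.
by apply: eq_bigr => i _; rewrite inE; case: (i \in A); case: (P i).
Qed.

Lemma sum_bZ (I : finType) (P : pred I) (F : I -> bool) :
  \sum_(i | P i) bZ (F i) = Posz (\sum_(i | P i) (F i : nat)).
Proof. by rewrite /bZ (big_morph Posz PoszD (erefl _)). Qed.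

Lemma connect_exit {X : finType} {e : rel X} {W : {set X}} {x y : X} :
  connect e x y -> x \in W -> y \notin W ->
  exists a b, [/\ a \in W, b \notin W & e a b].
Proof.
move/connectP => [p + ->]; elim: p x => [|z p IH] x /=.
  by move=> _ ->.
case/andP=> exz pz xW yW; case: (boolP (z \in W)) => zW.
  exact: IH pz zW yW.
by exists x, z.
Qed.

Section TreeEdges.

Context {X : finType} {S : {set X}} {T : {set {set X}}}.
Hypothesis edgeT : forall E, E \in T -> (E \subset S) && (#|E| == 2).
Hypothesis cardT : #|T| = (#|S| - 1)%N.
Hypothesis connT : forall x y, x \in S -> y \in S -> x != y ->
  connect (fun a b : X => [set a; b] \in T) x y.

Definition crossing (U W : {set X}) : {set {set X}} :=
  [set E in T | (E \subset W) && ~~ (E \subset U)].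

Lemma crossing_grow {U W : {set X}} {x y : X} :
  x \in U -> U \subset W -> W \subset S -> y \in S -> y \notin W ->
  exists2 b, (b \in S) && (b \notin W) &
    (#|crossing U W| < #|crossing U (b |: W)|)%N.
Proof.
move=> xU UW WS yS yW.
have xW : x \in W := subsetP UW x xU.
have xy : x != y by apply: contraNneq yW => <-.
have [a [b [aW bW abT]]] := connect_exit (connT x y (subsetP WS x xW) yS xy) xW yW.
have bS : b \in S.
  by case/andP: (edgeT _ abT) => /subsetP -> //; rewrite !inE eqxx orbT.
exists b; first by rewrite bS bW.
apply: proper_card; apply/properP; split.
  apply/subsetP => E; rewrite !inE => /and3P [-> EW ->].
  by rewrite (subset_trans EW (subsetUr _ _)).
exists [set a; b].
  rewrite !inE abT subUset !sub1set !inE aW eqxx orbT /=.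
  by apply: contra bW => /subsetP/(_ b); rewrite !inE eqxx orbT => /(_ isT)/(subsetP UW).
rewrite !inE abT /=; apply/negP => /andP [/subsetP/(_ b) + _].
by rewrite !inE eqxx orbT (negbTE bW) => /(_ isT).
Qed.

Lemma crossing_lower_bound {U : {set X}} {x : X} {k : nat} :
  x \in U -> U \subset S -> (k <= #|S| - #|U|)%N ->
  exists W : {set X}, [/\ U \subset W, W \subset S,
    #|W| = (#|U| + k)%N & (k <= #|crossing U W|)%N].
Proof.
move=> xU US; elim: k => [|k IH] Hk; first by exists U; rewrite addn0.
have [W [UW WS cardW kW]] := IH (ltnW Hk).
have : ~~ (S \subset W) by apply/negP => /subset_leq_card; rewrite cardW; lia.
case/subsetPn => y yS yW.
have [b /andP [bS bW] grow] := crossing_grow xU UW WS yS yW.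
exists (b |: W); split.
- exact: subset_trans UW (subsetUr _ _).
- by rewrite subUset sub1set bS.
- by rewrite cardsU1 bW cardW addnS.
- exact: leq_ltn_trans grow.
Qed.

Lemma tree_edges_inside (U : {set X}) :
  U \subset S -> (#|[set E in T | E \subset U]| <= #|U|.-1)%N.
Proof.
move=> US; have [->|[x xU]] := set_0Vmem U.
  rewrite cards0 leqn0 cards_eq0; apply/eqP/setP => E; rewrite !inE.
  apply/negP => /andP [/(edgeT E) /andP [_ /eqP cardE]].
  by rewrite subset0 => /eqP E0; rewrite E0 cards0 in cardE.
have [W [_ _ _ crossW]] := crossing_lower_bound xU US (leqnn _).
have crossT : (#|crossing U W| <= #|[set E in T | ~~ (E \subset U)]|)%N.
  by apply: subset_leq_card; apply/subsetP => E; rewrite !inE => /and3P [-> _ ->].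
have splitT : (#|[set E in T | E \subset U]|
              + #|[set E in T | ~~ (E \subset U)]| = #|T|)%N.
  rewrite -(cardsID [set E : {set X} | E \subset U] T).
  by congr (_ + _)%N; apply: eq_card => E; rewrite !inE // andbC.
have U_gt0 : (0 < #|U|)%N by apply/card_gt0P; exists x.
have := subset_leq_card US; lia.
Qed.

End TreeEdges.

Section Assignments.

Context {V : finType} {C1 : {set V}} {B : {set literal V}} {c2 : {ffun V -> bool}}.
Hypothesis HBcons : consistent B.
Hypothesis HBC1 : forall L, L \in B -> L.1 \in C1.

Lemma lit_val_assign (E : {set literal V}) (L : literal V) :
  L \in B -> lit_val L (assign C1 B E c2) = (L \notin E).
Proof.
case: L => x [] LB; rewrite /lit_val /assign ffunE /= (HBC1 _ LB) ?LB //.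
by have := HBcons x; rewrite LB andbT => /negbTE ->.
Qed.

Lemma lit_val_negate (L : literal V) (c : {ffun V -> bool}) :
  lit_val (L.1, ~~ L.2) c = ~~ lit_val L c.
Proof. by case: L => x []; rewrite /lit_val /= ?negbK. Qed.

Lemma assign_setU1_off (E : {set literal V}) (L : literal V) (y : V) :
  y != L.1 -> assign C1 B (L |: E) c2 y = assign C1 B E c2 y.
Proof.
case: L => x b /= yx; rewrite /assign !ffunE !in_setU1.
by rewrite !xpair_eqE (negbTE yx).
Qed.

End Assignments.

Section Outcomes.

Context {V : finType} {Omega : Type} (D : outcomes V Omega) (C1 : {set V}).
Context {B : {set literal V}} (c2 : {ffun V -> bool}) (w : Omega).
Hypothesis HBcons : consistent B.
Hypothesis HBC1 : forall L, L \in B -> L.1 \in C1.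

Local Notation f E := (D (assign C1 B E c2) w).

Lemma outcome_switch_off (L : literal V) (E : {set literal V}) :
  L \in B -> pos_monotonic D L -> L \notin E -> (f (L |: E) <= f E)%N.
Proof.
move=> LB monoL LE; apply: monoL.
- by move=> y yL; rewrite assign_setU1_off.
- by rewrite (lit_val_assign HBcons HBC1 _ _ LB).
- by rewrite (lit_val_assign HBcons HBC1 _ _ LB) negbK setU11.
Qed.

Lemma edge_fires (a b : literal V) :
  a \in B -> b \in B -> pos_monotonic D a -> pos_monotonic D b -> a != b ->
  f [set a; b] -> f [set a] && f [set b].
Proof.
move=> aB bB mono_a mono_b ab fab; apply/andP; split.
  have := outcome_switch_off b [set a] bB mono_b; rewrite in_set1 eq_sym ab setUC.
  by move=> /(_ isT); rewrite fab; case: (f _).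
have := outcome_switch_off a [set b] aB mono_a; rewrite in_set1 ab.
by move=> /(_ isT); rewrite fab; case: (f _).
Qed.

(* A conjunction true when all of B is on, and not containing the literal L
   of B, stays true when L alone is switched off: it cannot contain the
   complement of L (false when B is on), and every other literal keeps its
   value. *)
Lemma conj_val_switch_off (Bj : {set literal V}) (L : literal V) :
  L \in B -> L \notin Bj ->
  conj_val Bj (assign C1 B set0 c2) -> conj_val Bj (assign C1 B [set L] c2).
Proof.
move=> LB LBj /forallP conj0; apply/forallP => M; apply/implyP => MBj.
have M0 := implyP (conj0 M) MBj.
case: (eqVneq M.1 L.1) => [ML|ML].
  have M_opp : M = (L.1, ~~ L.2).
    have ML' : M != L by apply: contraNneq LBj => <-.
    case: M L ML ML' {MBj M0 LB LBj} => [m mb] [l lb] /= -> ML'.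
    by case: mb lb ML' => [] []; rewrite ?eqxx.
  move: M0; rewrite M_opp lit_val_negate.
  by rewrite (lit_val_assign HBcons HBC1 _ _ LB) in_set0.
by rewrite /lit_val -[[set L]]setU0 assign_setU1_off.
Qed.

Lemma empty_fires_singleton {p : nat} {A : 'I_p -> Omega -> bool}
    {Bs : 'I_p -> {set literal V}} :
  (forall c, D c w = [exists j, A j w && conj_val (Bs j) c]) ->
  (forall j, ~~ (B \subset Bs j)) ->
  f set0 -> exists2 L, L \in B & f [set L].
Proof.
move=> rep noB; rewrite rep => /existsP [j /andP [Aj conj_j]].
have /subsetPn [L LB LBj] := noB j.
exists L => //; rewrite rep; apply/existsP; exists j.
by rewrite Aj (conj_val_switch_off _ _ LB LBj conj_j).
Qed.

Lemma contrast_nonpos {Bplus : {set literal V}} {T : {set {set literal V}}} :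
  Bplus \subset B -> (forall L, L \in Bplus -> pos_monotonic D L) ->
  is_tree Bplus T -> (f set0 -> exists2 L, L \in B & f [set L]) ->
  (f set0 + \sum_(E in T) f E <= \sum_(L in B) f [set L])%N.
Proof.
move=> BpB mono [edgeT [cardT connT]] single.
pose U := [set L in Bplus | f [set L]].
have UBp : U \subset Bplus by apply/subsetP => L; rewrite inE => /andP [].
have fired_edges : (\sum_(E in T) f E <= #|[set E in T | E \subset U]|)%N.
  rewrite sum_indicator_card; apply: subset_leq_card; apply/subsetP => E.
  rewrite !inE => /andP [ET fE]; rewrite ET /=.
  have /andP [EBp /cards2P [a [b [ab Eab]]]] := edgeT E ET.
  move: EBp fE; rewrite Eab subUset !sub1set => /andP [aBp bBp] fE.
  have /andP [fa fb] := edge_fires a b (subsetP BpB a aBp) (subsetP BpB b bBp)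
    (mono a aBp) (mono b bBp) ab fE.
  by rewrite subUset !sub1set !inE aBp bBp fa fb.
have edges_U := tree_edges_inside edgeT cardT connT U UBp.
have U_singles : (#|U| <= \sum_(L in B) f [set L])%N.
  rewrite sum_indicator_card; apply: subset_leq_card; apply/subsetP => L.
  by rewrite !inE => /andP [/(subsetP BpB) -> ->].
case f0 : (f set0); last by move: fired_edges edges_U U_singles; lia.
have [L LB fL] := single f0.
have : (0 < \sum_(L in B) f [set L])%N.
  by rewrite sum_indicator_card; apply/card_gt0P; exists L; rewrite inE LB fL.
by move: fired_edges edges_U U_singles; lia.
Qed.

End Outcomes.

Theorem mainTheorem7 (V : finType) (Omega : Type) (D : outcomes V Omega)
  (C1 : {set V}) (B Bplus : {set literal V})
  (HBcons : consistent B)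
  (HBC1 : forall L, L \in B -> L.1 \in C1)
  (HBcard : #|B| = #|C1|)
  (HBplus : Bplus \subset B)
  (Hmono : forall L, L \in Bplus -> pos_monotonic D L) :
  (exists (T : {set {set literal V}}) (wstar : Omega) (c2 : {ffun V -> bool}),
     is_tree Bplus T /\
     0 < bZ (D (assign C1 B set0 c2) wstar)
         - \sum_(L in B) bZ (D (assign C1 B [set L] c2) wstar)
         + \sum_(E in T) bZ (D (assign C1 B E c2) wstar)) ->
  irreducible D B.
Proof.
move=> [T [w [c2 [tree contrast_pos]]]] p A Bs [_ rep].
apply/existsP; apply: contraTT contrast_pos => /existsPn noB.
have single := empty_fires_singleton D C1 c2 w HBcons HBC1 (fun c => rep c w) noB.
have := contrast_nonpos D C1 c2 w HBcons HBC1 HBplus Hmono tree single.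
rewrite !sum_bZ /bZ addrAC -PoszD subr_gt0 ltz_nat -leqNgt; exact: id.
Qed.
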